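(* Let $h\in\mathbb{Z}$ and $n\ge0$. The number of partitions $\lambda\vdash n$ having an $h$-fixed hook arising from a part of size $1$ equals the number of partitions of $n-h$ that have at least $1-h$ parts and in which the part $1$ occurs exactly once (this number being $0$ if $n-h<0$). Equivalently, the generating function of the former is $$q^{h+1}\left(\frac{1}{(q^2;q)_\infty}-\sum_{m=0}^{-h-1}\frac{q^{2m}}{(q;q)_m}\right),$$ where the finite sum is empty for $h\ge0$.
   Context: A partition $\lambda=(\lambda_1\ge\cdots\ge\lambda_t>0)$ of $n$ has first-column hook lengths $h_{s,1}(\lambda)=\lambda_s+(t-s)$. An $h$-fixed hook arising from a part of size $k$ is an index $s$ with $h_{s,1}(\lambda)=s+h$ and $\lambda_s=k$. Notation: $(a;q)_\infty=\prod_{j\ge0}(1-aq^j)$, $(q;q)_m=\prod_{j=1}^m(1-q^j)$. *)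

From mathcomp Require Import all_boot all_order all_algebra.
Set Implicit Arguments. Unset Strict Implicit. Unset Printing Implicit Defensive.
Import GRing.Theory Num.Theory.
Local Open Scope ring_scope.

Definition is_partition (m : int) (l : seq nat) : bool :=
  [&& sorted geq l, all (fun x => 0 < x)%N l & ((sumn l)%:Z == m)].

(* First-column hook length h_{s,1}(lambda) = lambda_s + (t - s), with
   1-based index s (1 <= s <= t = size l). *)
Definition hook1 (l : seq nat) (s : nat) : nat :=
  (nth 0 l s.-1 + (size l - s))%N.

Definition has_fixed_hook (h : int) (k : nat) (l : seq nat) : Prop :=
  exists s : nat, [/\ (1 <= s <= size l)%N,
                      (hook1 l s)%:Z = s%:Z + h & nth 0 l s.-1 = k].

Definition card_is (P : seq nat -> Prop) (k : nat) : Prop :=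
  exists e : seq (seq nat), [/\ uniq e, (forall s, s \in e <-> P s) & size e = k].

(* A partition of n with an h-fixed hook at a part equal to 1 has the shape
   mu ++ 1^c, the fixed index being the first of the trailing ones: a part 1
   forces all later parts to be 1, and the hook condition reads
   c = |mu| + 1 + h >= 1.  Raising every part of mu by one and appending a
   single 1 yields a partition of n - h with exactly one part 1 and
   |mu| + 1 >= 1 - h parts, and every such partition arises this way.  Both
   families are therefore in bijection with the finite set of partitions mu
   of n - h - |mu| - 1 with |mu| + h >= 0. *)

From mathcomp Require Import all_boot all_order all_algebra zify.
Import GRing.Theory Num.Theory.
Set Implicit Arguments. Unset Strict Implicit. Unset Printing Implicit Defensive.

Lemma card_is_image (p : pred (seq nat)) (P : seq nat -> Prop)
    (f : seq nat -> seq nat) k :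
  card_is (fun s => p s) k -> {in p &, injective f} ->
  (forall l, P l <-> exists2 s, p s & l = f s) -> card_is P k.
Proof.
move=> [e [e_uniq e_mem e_size]] f_inj P_img; exists (map f e); split.
- by rewrite map_inj_in_uniq // => x y /e_mem px /e_mem py; apply: f_inj.
- move=> l; rewrite P_img; split.
  + by case/mapP=> s /e_mem ps ->; exists s.
  + by case=> s /e_mem es ->; apply: map_f.
- by rewrite size_map.
Qed.

Fixpoint bounded_seqs (len N : nat) : seq (seq nat) :=
  if len is len'.+1 then
    [::] :: [seq x :: s | x <- iota 0 N.+1, s <- bounded_seqs len' N]
  else [:: [::]].

Lemma mem_bounded_seqs len N s :
  (size s <= len)%N -> all (fun x => x <= N)%N s -> s \in bounded_seqs len N.
Proof.
elim: len s => [|len IH] [|x s] // s_len /andP[x_le s_le].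
have -> : bounded_seqs len.+1 N =
  [::] :: [seq x :: s | x <- iota 0 N.+1, s <- bounded_seqs len N] by [].
rewrite in_cons allpairs_f ?orbT //; last exact: IH.
by rewrite mem_iota add0n ltnS.
Qed.

Lemma size_le_sumn l : all (fun x => 0 < x)%N l -> (size l <= sumn l)%N.
Proof. by elim: l => //= x l IH /andP[x_gt0 /IH]; lia. Qed.

Lemma le_sumn l x : x \in l -> (x <= sumn l)%N.
Proof. by elim: l => //= y l IH; rewrite in_cons => /orP[/eqP->|/IH]; lia. Qed.

Lemma card_is_bounded_sumn (p : pred (seq nat)) N :
  (forall s, p s -> all (fun x => 0 < x)%N s && (sumn s <= N)%N) ->
  exists k, card_is (fun s => p s) k.
Proof.
move=> p_bounded; exists (size (undup (filter p (bounded_seqs N N)))).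
exists (undup (filter p (bounded_seqs N N))); split=> //; first exact: undup_uniq.
move=> s; rewrite mem_undup mem_filter; split=> [/andP[] //|ps].
have /andP[s_pos s_sum] := p_bounded s ps.
rewrite ps mem_bounded_seqs //; first by rewrite (leq_trans (size_le_sumn s_pos)).
by apply/allP=> x /le_sumn x_le; rewrite (leq_trans x_le).
Qed.

Local Open Scope ring_scope.

Lemma is_partition_cat_ones (m : int) mu c :
  is_partition m (mu ++ nseq c 1%N) = is_partition (m - c%:Z) mu.
Proof.
rewrite /is_partition !(sorted_pairwise (rev_trans leq_trans)) pairwise_cat.
rewrite all_cat sumn_cat sumn_nseq mul1n.
have -> : pairwise geq (nseq c 1%N).
  by elim: c => //= c ->; rewrite andbT all_nseq /= orbT.
have -> : all (fun x => 0 < x)%N (nseq c 1%N) by rewrite all_nseq orbT.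
have -> : ((sumn mu + c)%N%:Z == m) = ((sumn mu)%:Z == m - c%:Z).
  by apply/eqP/eqP; lia.
case mu_pos: (all _ mu); rewrite ?andbF //= andbT.
suff -> : allrel geq mu (nseq c 1%N) by [].
apply/allrelP=> x y /(allP mu_pos) x_pos.
by rewrite mem_nseq => /andP[_ /eqP->].
Qed.

Definition raise_parts (mu : seq nat) : seq nat := map S mu ++ [:: 1%N].

Lemma is_partition_raise_parts (m : int) mu :
  is_partition m (raise_parts mu) && (count_mem 1%N (raise_parts mu) == 1%N)
  = is_partition (m - (size mu).+1%:Z) mu.
Proof.
rewrite /raise_parts /is_partition !(sorted_pairwise (rev_trans leq_trans)) pairwise_cat.
rewrite pairwise_map all_cat all_map sumn_cat count_cat count_map /= addn0 !andbT.
have -> : allrel geq (map S mu) [:: 1%N].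
  by apply/allrelP=> _ y /mapP[x _ ->]; rewrite mem_seq1 => /eqP->.
have -> : all (preim S (leq 1)) mu by apply/allP.
have -> : (count (preim S (pred1 1%N)) mu + 1 == 1)%N = all (fun x => 0 < x)%N mu.
  rewrite addn1 eqSS -leqn0 leqNgt -has_count -all_predC.
  by apply: eq_all => x; rewrite /= eqSS lt0n.
have -> : ((sumn (map S mu) + 1)%N%:Z == m) = ((sumn mu)%:Z == m - (size mu).+1%:Z).
  have -> : sumn (map S mu) = (sumn mu + size mu)%N by elim: mu => //= x mu ->; lia.
  by apply/eqP/eqP; lia.
by case: (all _ mu); rewrite /= ?andbF ?andbT.
Qed.

Lemma partition_drop_one (m : int) l i :
  is_partition m l -> (i < size l)%N -> nth 0%N l i = 1%N ->
  drop i l = nseq (size l - i) 1%N.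
Proof.
case/and3P=> l_sorted l_pos _ i_lt l_i.
apply: (@eq_from_nth _ 0%N); first by rewrite size_drop size_nseq.
move=> j; rewrite size_drop => j_lt; rewrite nth_drop nth_nseq j_lt.
have j_le : (nth 0%N l (i + j) <= 1)%N.
  rewrite -l_i; apply: (sorted_leq_nth (rev_trans leq_trans) leqnn _ l_sorted);
    rewrite ?inE; lia.
have : (0 < nth 0%N l (i + j))%N.
  by apply: (allP l_pos); apply: mem_nth; rewrite -ltn_subRL.
lia.
Qed.

Lemma fixed_hook1_decomp (h m : int) l :
  is_partition m l -> has_fixed_hook h 1 l ->
  exists mu c, [/\ l = mu ++ nseq c 1%N, c%:Z = (size mu)%:Z + 1 + h & (0 < c)%N].
Proof.
move=> l_part [s [/andP[s_gt0 s_le] hook_s l_s]].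
exists (take s.-1 l), (size l - s.-1)%N; split.
- by rewrite -(partition_drop_one l_part _ l_s) ?cat_take_drop //; lia.
- by rewrite size_takel; move: hook_s; rewrite /hook1 l_s; lia.
- lia.
Qed.

Lemma has_fixed_hook_cat_ones (h : int) mu c :
  c%:Z = (size mu)%:Z + 1 + h -> (0 < c)%N -> has_fixed_hook h 1 (mu ++ nseq c 1%N).
Proof.
move=> c_eq c_gt0.
have mu_c : nth 0%N (mu ++ nseq c 1%N) (size mu) = 1%N.
  by rewrite nth_cat ltnn subnn nth_nseq c_gt0.
by exists (size mu).+1; rewrite /hook1 /= mu_c size_cat size_nseq; split=> //; lia.
Qed.

Lemma single_one_decomp (m : int) l :
  is_partition m l -> count_mem 1%N l = 1%N -> exists mu, l = raise_parts mu.
Proof.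
move=> l_part one_once; set i := index 1%N l.
have i_lt : (i < size l)%N by rewrite index_mem -has_pred1 has_count one_once.
have l_eq : l = take i l ++ nseq (size l - i) 1%N.
  by rewrite -(partition_drop_one l_part i_lt) ?cat_take_drop // nth_index // -index_mem.
have one_notin : 1%N \notin take i l by rewrite in_take -?index_mem // ltnn.
have tail_one : (size l - i = 1)%N.
  move: one_once; rewrite {1}l_eq count_cat count_nseq /= mul1n.
  by rewrite (count_memPn one_notin).
exists (map predn (take i l)); rewrite /raise_parts -map_comp map_id_in.
  by rewrite {1}l_eq tail_one.
move=> y /mem_take y_in /=; case/and3P: l_part => _ /allP l_pos _.
by have := l_pos y y_in; case: y {y_in}.
Qed.

Definition core_partition (h : int) (n : nat) : pred (seq nat) :=
  fun mu => is_partition (n%:Z - h - (size mu).+1%:Z) mu && (0 <= (size mu)%:Z + h).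

Definition pad_ones (h : int) (mu : seq nat) : seq nat :=
  mu ++ nseq `|(size mu)%:Z + 1 + h| 1%N.

Lemma card_core_partition (h : int) (n : nat) :
  exists k, card_is (fun mu => core_partition h n mu) k.
Proof.
apply: (@card_is_bounded_sumn _ `|n%:Z - h|).
by move=> mu /andP[/and3P[_ -> /eqP mu_sum] _] /=; lia.
Qed.

Lemma fixed_hook1_partitionP (h : int) (n : nat) l :
  is_partition n%:Z l /\ has_fixed_hook h 1 l <->
  exists2 mu, core_partition h n mu & l = pad_ones h mu.
Proof.
split=> [[l_part l_hook] | [mu /andP[mu_part mu_h] ->]].
  have [mu [c [l_eq c_eq c_gt0]]] := fixed_hook1_decomp l_part l_hook.
  exists mu; last by rewrite l_eq /pad_ones -c_eq absz_nat.
  move: l_part; rewrite /core_partition l_eq is_partition_cat_ones.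
  have -> : n%:Z - c%:Z = n%:Z - h - (size mu).+1%:Z by lia.
  by move->; lia.
have c_eq : `|(size mu)%:Z + 1 + h|%:Z = (size mu)%:Z + 1 + h by lia.
split; last by apply: has_fixed_hook_cat_ones => //; lia.
rewrite is_partition_cat_ones c_eq.
by have -> : n%:Z - ((size mu)%:Z + 1 + h) = n%:Z - h - (size mu).+1%:Z by lia.
Qed.

Lemma single_one_partitionP (h : int) (n : nat) l :
  [/\ is_partition (n%:Z - h) l, 1 - h <= (size l)%:Z & count_mem 1%N l = 1%N] <->
  exists2 mu, core_partition h n mu & l = raise_parts mu.
Proof.
split=> [[l_part l_size one_once] | [mu /andP[mu_part mu_h] ->]].
  have [mu l_eq] := single_one_decomp l_part one_once.
  exists mu => //; apply/andP; split.
    by rewrite -is_partition_raise_parts -l_eq l_part one_once.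
  by move: l_size; rewrite l_eq size_cat size_map /=; lia.
move: mu_part; rewrite -is_partition_raise_parts => /andP[mu_part /eqP one_once].
by split=> //; rewrite size_cat size_map /=; lia.
Qed.

Lemma pad_ones_inj (h : int) (n : nat) :
  {in core_partition h n &, injective (pad_ones h)}.
Proof.
move=> mu1 mu2 /andP[_ mu1_h] /andP[_ mu2_h] pad_eq.
have size_pad mu : 0 <= (size mu)%:Z + h ->
    (size (pad_ones h mu))%:Z = 2 * (size mu)%:Z + 1 + h.
  by rewrite /pad_ones size_cat size_nseq; lia.
have size_eq : size mu1 = size mu2.
  by have := size_pad _ mu1_h; rewrite pad_eq size_pad //; lia.
by move/eqP: pad_eq; rewrite /pad_ones eqseq_cat // => /andP[/eqP].
Qed.

Lemma raise_parts_inj : injective raise_parts.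
Proof.
by move=> mu1 mu2; rewrite /raise_parts !cats1 => /rcons_inj[/(inj_map succn_inj)].
Qed.

Theorem theorem3p3 (h : int) (n : nat) :
  exists k : nat,
    card_is (fun l => is_partition n%:Z l /\ has_fixed_hook h 1 l) k /\
    card_is (fun l => [/\ is_partition (n%:Z - h) l,
                          1 - h <= (size l)%:Z & count_mem 1%N l = 1%N]) k.
Proof.
have [k core_k] := card_core_partition h n.
exists k; split.
- exact: card_is_image core_k (@pad_ones_inj h n) (@fixed_hook1_partitionP h n).
- exact: card_is_image core_k (in2W raise_parts_inj) (@single_one_partitionP h n).
Qed.
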